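(* Let $Q$ access points be at fixed positions $\mathbf{o}_1,\dots,\mathbf{o}_Q\in\mathbb{R}^2$ and let a user move on $\mathbf{x}_t=\mathbf{x}+t\mathbf{v}$, $t=1,2,\dots$, with $\mathbf{v}\neq\mathbf{0}$, not passing through any AP. Put $\bm{l}_q=\mathbf{x}-\mathbf{o}_q$, $\mathbf{d}_{t,q}=\bm{l}_q+t\mathbf{v}$, $d_{t,q}=\|\mathbf{d}_{t,q}\|$, $d_{\min}=\min_{t,q}d_{t,q}>0$. Let $C_0=G_1N_{\mathrm t}(N_{\mathrm t}^2-1)/(\sigma_{\mathrm n}^2d_{\min}^2)$, $$\mathbf{A}_{T,x}=\sum_{q=1}^{Q}\sum_{t=1}^{T}\frac{d_{t,q}^2\mathbf{I}-\mathbf{d}_{t,q}\mathbf{d}_{t,q}^{\mathrm T}}{d_{t,q}^4},\qquad \bar\Delta_{T,x}=\mathrm{tr}\{(C_0\mathbf{A}_{T,x})^{-1}\}.$$ Then the CRLB of $\mathbf{x}$ satisfies $B(\mathbf{x})=\mathrm{tr}\{\mathbf{F}_{T,x}^{-1}\}\ge\bar\Delta_{T,x}$, with equality achieved when $d_{t,q}=d_{\min}$ and $\phi_{t,q}=0$ for all $t,q$. In addition, $\bar\Delta_{T,x}$ is strictly decreasing in $T$, provided that at least two vectors in $\{\bm{l}_1,\dots,\bm{l}_Q,\mathbf{v}\}$ are linearly independent, but $\bar\Delta_{T,x}$ converges to a strictly positive number as $T\to\infty$.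
   Context: Each AP carries an $N_{\mathrm t}$-element uniform linear array; $G_1>0$ is an antenna-configuration constant and $\sigma_{\mathrm n}^2>0$ is the noise variance. The AoD measurement from AP $q$ at time $t$ is Gaussian with mean the geometric azimuth angle from $\mathbf{o}_q$ to $\mathbf{x}_t$ and variance $\sigma_{\theta,t,q}^2=d_{t,q}^2\sigma_{\mathrm n}^2/(G_1N_{\mathrm t}(N_{\mathrm t}^2-1)\cos^2\phi_{t,q})$, where $\phi_{t,q}$ is the angle of the user relative to the array reference direction of AP $q$ (the single-snapshot ULA angle CRLB). Measurements are independent. $\mathbf{F}_{T,x}$ is the Fisher information of the initial position $\mathbf{x}$ (diagonal block of the FIM of $(\mathbf{x},\mathbf{v})$), namely $\mathbf{F}_{T,x}=\sum_{t=1}^T\sum_{q=1}^Q\frac{1}{\sigma_{\theta,t,q}^2d_{t,q}^4}(d_{t,q}^2\mathbf{I}-\mathbf{d}_{t,q}\mathbf{d}_{t,q}^{\mathrm T})$. *)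

From HB Require Import structures.
From mathcomp Require Import all_boot all_order all_algebra.
From mathcomp Require Import all_classical all_reals all_analysis.
Set Implicit Arguments. Unset Strict Implicit. Unset Printing Implicit Defensive.
Import Order.TTheory GRing.Theory Num.Theory.
Local Open Scope ring_scope.

Definition vnorm (R : realType) (u : 'cV[R]_2) : R :=
  Num.sqrt (\sum_(i < 2) u i 0 ^+ 2).

Definition lvec (R : realType) (Q : nat) (x : 'cV[R]_2) (o : 'I_Q -> 'cV[R]_2)
  (q : 'I_Q) : 'cV[R]_2 := x - o q.

Definition dvec (R : realType) (Q : nat) (x v : 'cV[R]_2) (o : 'I_Q -> 'cV[R]_2)
  (t : nat) (q : 'I_Q) : 'cV[R]_2 := lvec x o q + t%:R *: v.

Definition proj_term (R : realType) (u : 'cV[R]_2) : 'M[R]_2 :=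
  (vnorm u ^+ 4)^-1 *: ((vnorm u ^+ 2)%:M - u *m u^T).

Definition A_T (R : realType) (Q : nat) (x v : 'cV[R]_2) (o : 'I_Q -> 'cV[R]_2)
  (T : nat) : 'M[R]_2 :=
  \sum_(q < Q) \sum_(1 <= t < T.+1) proj_term (dvec x v o t q).

Definition C0 (R : realType) (G1 : R) (Nt : nat) (sigma2 dmin : R) : R :=
  G1 * Nt%:R * (Nt%:R ^+ 2 - 1) / (sigma2 * dmin ^+ 2).

(* AoD variance sigma_{theta,t,q}^2 = d^2 sigma_n^2 / (G1 Nt (Nt^2-1) cos^2 phi) *)
Definition sigma_theta2 (R : realType) (Q : nat) (G1 : R) (Nt : nat) (sigma2 : R)
  (x v : 'cV[R]_2) (o : 'I_Q -> 'cV[R]_2) (phi : nat -> 'I_Q -> R)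
  (t : nat) (q : 'I_Q) : R :=
  vnorm (dvec x v o t q) ^+ 2 * sigma2 /
    (G1 * Nt%:R * (Nt%:R ^+ 2 - 1) * cos (phi t q) ^+ 2).

Definition FisherX (R : realType) (Q : nat) (G1 : R) (Nt : nat) (sigma2 : R)
  (x v : 'cV[R]_2) (o : 'I_Q -> 'cV[R]_2) (phi : nat -> 'I_Q -> R)
  (T : nat) : 'M[R]_2 :=
  \sum_(1 <= t < T.+1) \sum_(q < Q)
    ((sigma_theta2 G1 Nt sigma2 x v o phi t q * vnorm (dvec x v o t q) ^+ 4)^-1 *:
      ((vnorm (dvec x v o t q) ^+ 2)%:M - dvec x v o t q *m (dvec x v o t q)^T)).

(* tr{M^{-1}} as an extended real: +oo when M is singular. *)
Definition trinv (R : realType) (M : 'M[R]_2) : \bar R :=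
  if M \in unitmx then ((\tr (invmx M))%:E)%E else (+oo)%E.

Definition CRLB (R : realType) (Q : nat) (G1 : R) (Nt : nat) (sigma2 : R)
  (x v : 'cV[R]_2) (o : 'I_Q -> 'cV[R]_2) (phi : nat -> 'I_Q -> R) (T : nat) : \bar R :=
  trinv (FisherX G1 Nt sigma2 x v o phi T).

Definition Delta_bar (R : realType) (Q : nat) (G1 : R) (Nt : nat) (sigma2 dmin : R)
  (x v : 'cV[R]_2) (o : 'I_Q -> 'cV[R]_2) (T : nat) : \bar R :=
  trinv (C0 G1 Nt sigma2 dmin *: A_T x v o T).

Definition lv_family (R : realType) (Q : nat) (x v : 'cV[R]_2) (o : 'I_Q -> 'cV[R]_2)
  (i : option 'I_Q) : 'cV[R]_2 :=
  match i with Some q => lvec x o q | None => v end.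

From HB Require Import structures.
From mathcomp Require Import all_boot all_order all_algebra.
From mathcomp Require Import all_classical all_reals all_analysis.
From mathcomp Require Import ring lra.
Import Order.TTheory GRing.Theory Num.Theory.
Local Open Scope classical_set_scope.
Local Open Scope ring_scope.

(* [C0 A_T] and the Fisher information [F_T] are nonnegative combinations of the
   positive semidefinite matrices [perp_mx d = |d|^2 I - d d^T], and so is
   [C0 A_T - F_T], because every Fisher weight is at most [C0 / |d|^4].  On 2x2
   positive semidefinite matrices [tr (M^-1) = tr M / det M] is antitone, strictly
   so when a summand of positive trace is added; this gives the bound, and the
   strict decrease once [det A_T > 0], which an AP with [l_q] not parallel to [v]
   guarantees from [T = 2] on.  The limit is positive because
   [tr M / det M >= 4 / tr M] while [tr A_T] stays bounded, its terms
   [1 / |d_{t,q}|^2] being [O(1 / t^2)]. *)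

Lemma det_mx2 {R : comPzRingType} (M : 'M[R]_2) :
  \det M = M 0 0 * M 1 1 - M 0 1 * M 1 0.
Proof.
rewrite (expand_det_row _ 0) !big_ord_recl big_ord0 /cofactor !det_mx11 !mxE /=.
have -> : lift 0 (0 : 'I_1) = 1 by apply/val_inj.
have -> : lift 1 (0 : 'I_1) = 0 by apply/val_inj.
rewrite expr0 expr1; ring.
Qed.

Lemma mxtrace2 {R : pzRingType} (M : 'M[R]_2) : \tr M = M 0 0 + M 1 1.
Proof.
rewrite /mxtrace !big_ord_recl big_ord0 addr0.
by have -> : lift ord0 (ord0 : 'I_1) = 1 :> 'I_2 by apply/val_inj.
Qed.

Lemma mxtrace_adj2 {R : comPzRingType} (M : 'M[R]_2) : \tr (\adj M) = \tr M.
Proof.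
rewrite !mxtrace2 !mxE /cofactor !det_mx11 !mxE /=.
have -> : lift 0 (0 : 'I_1) = 1 by apply/val_inj.
have -> : lift 1 (0 : 'I_1) = 0 by apply/val_inj.
rewrite !expr2; ring.
Qed.

Lemma mxtrace_invmx2 {R : fieldType} (M : 'M[R]_2) :
  M \in unitmx -> \tr (invmx M) = \tr M / \det M.
Proof. by move=> uM; rewrite /invmx uM mxtraceZ mxtrace_adj2 mulrC. Qed.

Section PSD2.
Context {R : realFieldType}.
Implicit Types (F G M : 'M[R]_2).

(* [x * w + y * u - 2 * m * n] is the mixed discriminant of [[x, m], [m, y]]
   and [[u, n], [n, w]], i.e. [det (A + B) - det A - det B]. *)
Lemma mixed_discriminant_ge0 [x y u w m n : R] :
  0 <= x -> 0 <= y -> 0 <= u -> 0 <= w ->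
  m ^+ 2 <= x * y -> n ^+ 2 <= u * w -> 2 * m * n <= x * w + y * u.
Proof.
move=> x0 y0 u0 w0 mxy nuw.
have rhs_ge0 : 0 <= x * w + y * u by rewrite addr_ge0 ?mulr_ge0.
suff : (2 * m * n) ^+ 2 <= (x * w + y * u) ^+ 2 by nra.
have prod_le : m ^+ 2 * n ^+ 2 <= (x * y) * (u * w) by apply: ler_pM; rewrite ?sqr_ge0.
have := sqr_ge0 (x * w - y * u); nra.
Qed.

Lemma mixed_discriminant_gt0 [x y u w m n : R] :
  0 <= x -> 0 <= y -> 0 < u -> 0 < w -> 0 < x + y ->
  m ^+ 2 <= x * y -> n ^+ 2 < u * w -> 2 * m * n < x * w + y * u.
Proof.
move=> x0 y0 u0 w0 xy0 mxy nuw.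
have rhs_gt0 : 0 < x * w + y * u.
  have [x_eq0|x_neq0] := eqVneq x 0.
    rewrite x_eq0 mul0r add0r; apply: mulr_gt0 => //.
    by rewrite x_eq0 add0r in xy0.
  have x_gt0 : 0 < x by rewrite lt0r x_neq0.
  nra.
have [->|m_neq0] := eqVneq m 0; first by rewrite mulr0 mul0r.
suff : (2 * m * n) ^+ 2 < (x * w + y * u) ^+ 2 by nra.
have xy_gt0 : 0 < x * y by apply: lt_le_trans mxy; rewrite exprn_even_gt0.
have prod_lt : m ^+ 2 * n ^+ 2 < (x * y) * (u * w).
  apply: le_lt_trans (_ : (x * y) * n ^+ 2 < _); last by rewrite ltr_pM2l.
  by apply: ler_wpM2r; rewrite ?sqr_ge0.
have := sqr_ge0 (x * w - y * u); nra.
Qed.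

Definition psd2 M : Prop :=
  [/\ M 1 0 = M 0 1, 0 <= M 0 0, 0 <= M 1 1 & M 0 1 ^+ 2 <= M 0 0 * M 1 1].

Lemma psd2_det [M] : psd2 M -> \det M = M 0 0 * M 1 1 - M 0 1 ^+ 2.
Proof. by case=> sym _ _ _; rewrite det_mx2 sym expr2. Qed.

Lemma psd2_det_ge0 [M] : psd2 M -> 0 <= \det M.
Proof. by move=> psdM; rewrite psd2_det // subr_ge0; case: psdM. Qed.

Lemma psd2_trace_ge0 [M] : psd2 M -> 0 <= \tr M.
Proof. by case=> _ a0 c0 _; rewrite mxtrace2 addr_ge0. Qed.

Lemma psd2D [F G] : psd2 F -> psd2 G -> psd2 (F + G).
Proof.
case=> sF a0 c0 hF [sG p0 r0 hG]; rewrite /psd2 !mxE sF sG.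
have := mixed_discriminant_ge0 a0 c0 p0 r0 hF hG.
by split; nra.
Qed.

Lemma det_psd2D [F G] : psd2 F -> psd2 G -> \det F + \det G <= \det (F + G).
Proof.
move=> psdF psdG; have psdFG := psd2D psdF psdG.
rewrite !psd2_det // !mxE.
case: psdF psdG => _ a0 c0 hF [_ p0 r0 hG].
have := mixed_discriminant_ge0 a0 c0 p0 r0 hF hG; nra.
Qed.

Lemma psd2Z c M : 0 <= c -> psd2 M -> psd2 (c *: M).
Proof.
move=> c0 [sM a0 c0' hM]; rewrite /psd2 !mxE sM.
split=> //; rewrite ?mulr_ge0 //.
have := ler_wpM2l (sqr_ge0 c) hM; rewrite exprMn; nra.
Qed.

Lemma psd2_sum (I : Type) (r : seq I) (P : pred I) (f : I -> 'M[R]_2) :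
  (forall i, P i -> psd2 (f i)) -> psd2 (\sum_(i <- r | P i) f i).
Proof.
move=> psdf; apply: (big_ind psd2) => //; last exact: psd2D.
by rewrite /psd2 !mxE expr2 mulr0.
Qed.

Lemma det_le_trace_sqr [M] : M 1 0 = M 0 1 -> 4 * \det M <= \tr M ^+ 2.
Proof.
move=> sym; rewrite det_mx2 mxtrace2 sym -subr_ge0.
rewrite (_ : _ - _ = (M 0 0 - M 1 1) ^+ 2 + 4 * M 0 1 ^+ 2); last by ring.
by rewrite addr_ge0 ?sqr_ge0 // mulr_ge0 ?sqr_ge0.
Qed.

Lemma psd2_trace_gt0 [M] : psd2 M -> 0 < \det M -> 0 < \tr M.
Proof.
move=> psdM detM_gt0; have [sym _ _ _] := psdM; have := det_le_trace_sqr sym.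
rewrite lt_neqAle psd2_trace_ge0 // andbT eq_sym.
by apply: contraTneq => ->; rewrite expr0n /= -ltNge pmulr_rgt0.
Qed.

(* The first summand is the mixed discriminant of [G] and [F *m F]. *)
Lemma trace_det_psd2D_gap [F G] : psd2 F -> psd2 G ->
  \tr F * \det (F + G) - \tr (F + G) * \det F =
  G 1 1 * (F 0 0 ^+ 2 + F 0 1 ^+ 2) + G 0 0 * (F 1 1 ^+ 2 + F 0 1 ^+ 2)
  - 2 * G 0 1 * ((F 0 0 + F 1 1) * F 0 1) + \tr F * \det G.
Proof.
move=> psdF psdG; have psdFG := psd2D psdF psdG.
by rewrite !psd2_det // !mxtrace2 !mxE; ring.
Qed.

Lemma trace_det_psd2D_le [F G] : psd2 F -> psd2 G ->
  \tr (F + G) * \det F <= \tr F * \det (F + G).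
Proof.
move=> psdF psdG; rewrite -subr_ge0 trace_det_psd2D_gap //.
rewrite addr_ge0 ?mulr_ge0 ?psd2_trace_ge0 ?psd2_det_ge0 // subr_ge0.
case: psdF psdG => _ a0 c0 hF [_ p0 r0 hG].
apply: mixed_discriminant_ge0 => //; rewrite ?addr_ge0 ?sqr_ge0 // 1?mulrC //.
rewrite -subr_ge0 (_ : _ - _ = (F 0 0 * F 1 1 - F 0 1 ^+ 2) ^+ 2); last by ring.
exact: sqr_ge0.
Qed.

Lemma trace_det_psd2D_lt [F G] : psd2 F -> psd2 G -> 0 < \det F -> 0 < \tr G ->
  \tr (F + G) * \det F < \tr F * \det (F + G).
Proof.
move=> psdF psdG detF_gt0 trG_gt0; rewrite -subr_gt0 trace_det_psd2D_gap //.
rewrite ltr_pwDl ?mulr_ge0 ?psd2_trace_ge0 ?psd2_det_ge0 // subr_gt0.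
rewrite psd2_det // in detF_gt0; rewrite mxtrace2 in trG_gt0.
case: psdF psdG => _ a0 c0 hF [_ p0 r0 hG].
apply: mixed_discriminant_gt0 => //; [nra | nra | by rewrite addrC | by rewrite mulrC |].
rewrite -subr_gt0 (_ : _ - _ = (F 0 0 * F 1 1 - F 0 1 ^+ 2) ^+ 2); last by ring.
by rewrite exprn_gt0.
Qed.

End PSD2.

Section TraceInverse.
Context {R : realType}.
Implicit Types (F G M : 'M[R]_2).
Local Open Scope ereal_scope.

Lemma trinv_psd2 [M] : psd2 M ->
  trinv M = if (0 < \det M)%R then (\tr M / \det M)%:E else +oo.
Proof.
move=> psdM; rewrite /trinv unitmxE unitfE lt0r psd2_det_ge0 // andbT.
by case: ifP => // detM_neq0; rewrite mxtrace_invmx2 // unitmxE unitfE.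
Qed.

Lemma trinv_psd2_fin_num [M] : psd2 M -> (0 < \det M)%R -> trinv M \is a fin_num.
Proof. by move=> psdM detM_gt0; rewrite trinv_psd2 // detM_gt0. Qed.

Lemma trinv_psd2D_le [F G] : psd2 F -> psd2 G -> trinv (F + G) <= trinv F.
Proof.
move=> psdF psdG; have psdFG := psd2D psdF psdG; rewrite !trinv_psd2 //.
have [detF_gt0|_] := ltP 0%R (\det F); last exact: leey.
have detFG_gt0 : (0 < \det (F + G))%R.
  apply: lt_le_trans (det_psd2D psdF psdG).
  exact: ltr_wpDr (psd2_det_ge0 psdG) detF_gt0.
rewrite detFG_gt0 lee_fin ler_pdivrMr // mulrAC ler_pdivlMr //.
exact: trace_det_psd2D_le.
Qed.

Lemma trinv_psd2D_lt [F G] : psd2 F -> psd2 G ->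
  (0 < \det (F + G))%R -> (0 < \tr G)%R -> trinv (F + G) < trinv F.
Proof.
move=> psdF psdG detFG_gt0 trG_gt0; have psdFG := psd2D psdF psdG.
rewrite !trinv_psd2 // detFG_gt0.
have [detF_gt0|_] := ltP 0%R (\det F); last exact: ltey.
rewrite lte_fin ltr_pdivrMr // mulrAC ltr_pdivlMr //.
exact: trace_det_psd2D_lt.
Qed.

Lemma trinv_psd2_ge [M] (b : R) : psd2 M -> (\tr M <= b)%R -> (4 / b)%:E <= trinv M.
Proof.
move=> psdM trM_le; rewrite trinv_psd2 //.
have [detM_gt0|_] := ltP 0%R (\det M); last exact: leey.
have [sym _ _ _] := psdM; have sq_le := det_le_trace_sqr sym.
have trM_gt0 := psd2_trace_gt0 psdM detM_gt0.
rewrite lee_fin (@le_trans _ _ (4 / \tr M)%R) //.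
  by rewrite ler_pM2l // lef_pV2 // posrE (lt_le_trans trM_gt0).
by rewrite ler_pdivrMr // mulrAC ler_pdivlMr // -expr2.
Qed.

End TraceInverse.

Section PlaneVectors.
Context {R : realType}.
Implicit Types (u w l v d e : 'cV[R]_2).

Lemma vnorm_sqr u : vnorm u ^+ 2 = u 0 0 ^+ 2 + u 1 0 ^+ 2.
Proof.
rewrite /vnorm sqr_sqrtr ?sumr_ge0 // => [|i _]; last exact: sqr_ge0.
rewrite !big_ord_recl big_ord0 addr0.
by have -> : lift ord0 (ord0 : 'I_1) = 1 :> 'I_2 by apply/val_inj.
Qed.

Lemma vnorm_ge0 u : 0 <= vnorm u.
Proof. exact: sqrtr_ge0. Qed.

Lemma vnorm_gt0 [u] : u != 0 -> 0 < vnorm u.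
Proof.
move=> u_neq0; rewrite /vnorm sqrtr_gt0 lt_neqAle sumr_ge0 ?andbT => [|i _]; last exact: sqr_ge0.
apply: contra u_neq0; rewrite eq_sym psumr_eq0 => [/allP u0|i _]; last exact: sqr_ge0.
apply/eqP/matrixP => i j; rewrite (ord1 j) mxE.
by apply/eqP; rewrite -sqrf_eq0; exact: (u0 i (mem_index_enum i)).
Qed.

Definition perp_mx u : 'M[R]_2 := (vnorm u ^+ 2)%:M - u *m u^T.

Lemma perp_mx00 u : perp_mx u 0 0 = u 1 0 ^+ 2.
Proof. by rewrite !mxE big_ord1 !mxE vnorm_sqr mulr1n; ring. Qed.
Lemma perp_mx11 u : perp_mx u 1 1 = u 0 0 ^+ 2.
Proof. by rewrite !mxE big_ord1 !mxE vnorm_sqr mulr1n; ring. Qed.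
Lemma perp_mx01 u : perp_mx u 0 1 = - (u 0 0 * u 1 0).
Proof. by rewrite !mxE big_ord1 !mxE mulr0n; ring. Qed.
Lemma perp_mx10 u : perp_mx u 1 0 = - (u 0 0 * u 1 0).
Proof. by rewrite !mxE big_ord1 !mxE mulr0n; ring. Qed.

Lemma psd2_perp_mx u : psd2 (perp_mx u).
Proof.
rewrite /psd2 perp_mx00 perp_mx01 perp_mx10 perp_mx11 sqrrN exprMn [_ * u 0 0 ^+ 2]mulrC.
by split; rewrite ?sqr_ge0.
Qed.

Lemma mxtrace_perp_mx u : \tr (perp_mx u) = vnorm u ^+ 2.
Proof. by rewrite mxtrace2 perp_mx00 perp_mx11 vnorm_sqr addrC. Qed.

Definition cross2 u w : R := u 0 0 * w 1 0 - u 1 0 * w 0 0.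

Lemma det_perp_mxD (a b : R) d e :
  \det (a *: perp_mx d + b *: perp_mx e) = a * b * cross2 d e ^+ 2.
Proof.
by rewrite det_mx2 !mxE !big_ord1 !mxE /= !mulr1n !mulr0n !vnorm_sqr /cross2; ring.
Qed.

Lemma row_free_cross2 u w : row_free (col_mx u^T w^T) = (cross2 u w != 0).
Proof.
rewrite (@row_free_unit _ 2) unitmxE unitfE det_mx2 /cross2.
have rowE i j : col_mx u^T w^T i j = if i == 0 then u j 0 else w j 0.
  rewrite mxE; case: splitP => k; rewrite (ord1 k) mxE => ik.
    by have -> : i = 0 by apply/val_inj; rewrite /= ik.
  by have -> : (i == 0) = false by apply/negbTE; rewrite -val_eqE /= ik.
by rewrite !rowE.
Qed.

Lemma cross2C u w : cross2 u w = - cross2 w u.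
Proof. by rewrite /cross2; ring. Qed.

Lemma cross2_line l v (s t : R) :
  cross2 (l + s *: v) (l + t *: v) = (t - s) * cross2 l v.
Proof. by rewrite /cross2 !mxE; ring. Qed.

Lemma cross2_parallel [l w v] : v != 0 ->
  cross2 l v = 0 -> cross2 w v = 0 -> cross2 l w = 0.
Proof.
move=> v_neq0 lv0 wv0.
have := exprn_gt0 2 (vnorm_gt0 v_neq0); rewrite vnorm_sqr => v_gt0.
apply: (mulIf (lt0r_neq0 v_gt0)); rewrite mul0r.
transitivity ((v 0 0 * w 0 0 + v 1 0 * w 1 0) * cross2 l v
              - (v 0 0 * l 0 0 + v 1 0 * l 1 0) * cross2 w v).
  by rewrite /cross2; ring.
by rewrite lv0 wv0 !mulr0 subr0.
Qed.

Lemma psd2_proj_term u : psd2 (proj_term u).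
Proof. by apply: psd2Z; [rewrite invr_ge0 exprn_ge0 ?vnorm_ge0 | exact: psd2_perp_mx]. Qed.

Lemma mxtrace_proj_term u : u != 0 -> \tr (proj_term u) = (vnorm u ^+ 2)^-1.
Proof.
move=> u_neq0; have := lt0r_neq0 (vnorm_gt0 u_neq0).
by rewrite mxtraceZ mxtrace_perp_mx => ?; field.
Qed.

Lemma sqr_line_le l v (t : R) :
  t ^+ 2 * vnorm v ^+ 2 <= 2 * vnorm (l + t *: v) ^+ 2 + 2 * vnorm l ^+ 2.
Proof.
rewrite !vnorm_sqr !mxE.
have := sqr_ge0 (2 * l 0 0 + t * v 0 0); have := sqr_ge0 (2 * l 1 0 + t * v 1 0).
nra.
Qed.

(* From [t v = (l + t v) - l] and [vnorm l <= vnorm l * vnorm (l + t v) / dmin]. *)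
Lemma inv_vnorm_line_le l v (t dmin : R) :
  v != 0 -> 0 < t -> 0 < dmin -> dmin <= vnorm (l + t *: v) ->
  (vnorm (l + t *: v) ^+ 2)^-1 <=
    (2 + 2 * vnorm l ^+ 2 / dmin ^+ 2) / vnorm v ^+ 2 / t ^+ 2.
Proof.
move=> v_neq0 t_gt0 dmin_gt0 dmin_le.
set D := vnorm (l + t *: v) ^+ 2; set K := 2 + 2 * vnorm l ^+ 2 / dmin ^+ 2.
have V_gt0 : 0 < vnorm v ^+ 2 by rewrite exprn_gt0 ?vnorm_gt0.
have t2_gt0 : 0 < t ^+ 2 by rewrite exprn_gt0.
have dmin2_gt0 : 0 < dmin ^+ 2 by rewrite exprn_gt0.
have D_ge : dmin ^+ 2 <= D by rewrite ler_pXn2r // ?nnegrE ?vnorm_ge0 ?ltW.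
have D_gt0 : 0 < D := lt_le_trans dmin2_gt0 D_ge.
have L_le : vnorm l ^+ 2 <= vnorm l ^+ 2 / dmin ^+ 2 * D.
  by rewrite mulrAC ler_pdivlMr // ler_wpM2l ?exprn_ge0 ?vnorm_ge0.
have K_gt0 : 0 < K.
  apply: ltr_wpDr => //.
  by rewrite divr_ge0 ?mulr_ge0 ?exprn_ge0 ?vnorm_ge0 // ltW.
have key : t ^+ 2 * vnorm v ^+ 2 <= K * D.
  by apply: le_trans (sqr_line_le l v t) _; rewrite /K -/D; lra.
rewrite (_ : K / _ / _ = (t ^+ 2 * vnorm v ^+ 2 / K)^-1); last first.
  by rewrite !invfM invrK; ring.
have X_gt0 : 0 < t ^+ 2 * vnorm v ^+ 2 / K by rewrite divr_gt0 // mulr_gt0.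
by rewrite lef_pV2 ?posrE // ler_pdivrMr // [D * _]mulrC.
Qed.

End PlaneVectors.

Lemma sum_inv_sqr_le2 {R : realFieldType} (T : nat) :
  \sum_(1 <= t < T.+1) (t%:R ^+ 2 : R)^-1 <= 2.
Proof.
have telescoped n : \sum_(1 <= t < n.+2) (t%:R ^+ 2 : R)^-1 <= 2 - n.+1%:R^-1.
  elim: n => [|n IHn]; first by rewrite big_nat1 mulr1n expr1n invr1; lra.
  rewrite big_nat_recr //=; set m : R := n.+1%:R in IHn *.
  have m_gt0 : 0 < m by rewrite ltr0n.
  have m1_gt0 : 0 < m + 1 by rewrite ltr_wpDr.
  have -> : (n.+2%:R : R) = m + 1 by rewrite /m -natr1.
  clearbody m; suff : ((m + 1) ^+ 2)^-1 <= m^-1 - (m + 1)^-1 by lra.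
  rewrite (_ : _ - _ = (m * (m + 1))^-1); last by field; rewrite !lt0r_neq0.
  by rewrite lef_pV2 ?posrE ?exprn_gt0 ?mulr_gt0 // expr2 ler_wpM2r ?lerDl // ltW.
case: T => [|n]; first by rewrite big_geq.
by apply: le_trans (telescoped n) _; rewrite gerBl invr_ge0.
Qed.

Definition A_T_trace_bound {R : realType} {Q : nat} (x v : 'cV[R]_2)
    (o : 'I_Q -> 'cV[R]_2) (dmin : R) : R :=
  \sum_(q < Q) (2 + 2 * vnorm (lvec x o q) ^+ 2 / dmin ^+ 2) / vnorm v ^+ 2 * 2.

Section Trajectory.
Context {R : realType} {Q : nat} {x v : 'cV[R]_2} {o : 'I_Q -> 'cV[R]_2}.
Hypothesis dvec_neq0 : forall t q, (0 < t)%N -> dvec x v o t q != 0.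

Lemma psd2_A_T T : psd2 (A_T x v o T).
Proof. by apply: psd2_sum => q _; apply: psd2_sum => t _; exact: psd2_proj_term. Qed.

Lemma A_TS T :
  A_T x v o T.+1 = A_T x v o T + \sum_(q < Q) proj_term (dvec x v o T.+1 q).
Proof. by rewrite /A_T -big_split; apply: eq_bigr => q _; rewrite big_nat_recr. Qed.

Lemma psd2_A_T_increment T : psd2 (\sum_(q < Q) proj_term (dvec x v o T q)).
Proof. by apply: psd2_sum => q _; exact: psd2_proj_term. Qed.

Lemma nondecreasing_det_A_T : nondecreasing_seq (fun T => \det (A_T x v o T)).
Proof.
apply/nondecreasing_seqP => T; rewrite A_TS.
apply: le_trans (det_psd2D (psd2_A_T T) (psd2_A_T_increment T.+1)).
by rewrite lerDl; apply/psd2_det_ge0/psd2_A_T_increment.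
Qed.

(* The observations of a single AP at times 1 and 2 already make [A_T] invertible. *)
Lemma det_A_T_gt0 [q0 T] : cross2 (lvec x o q0) v != 0 -> (1 < T)%N ->
  0 < \det (A_T x v o T).
Proof.
move=> cross_neq0 T_gt1; apply: lt_le_trans (nondecreasing_det_A_T _ _ T_gt1).
have psd2_rest : psd2 (\sum_(q < Q | q != q0) \sum_(1 <= t < 3) proj_term (dvec x v o t q)).
  by apply: psd2_sum => q _; apply: psd2_sum => t _; exact: psd2_proj_term.
rewrite /A_T (bigD1 q0) //= big_ltn // big_ltn // big_geq // addr0.
apply: lt_le_trans (det_psd2D (psd2D (psd2_proj_term _) (psd2_proj_term _)) psd2_rest).
apply: ltr_wpDr; first exact: psd2_det_ge0.
rewrite det_perp_mxD; apply: mulr_gt0.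
  by rewrite mulr_gt0 // invr_gt0 exprn_gt0 // vnorm_gt0 // dvec_neq0.
by rewrite exprn_even_gt0 //= /dvec cross2_line mulf_neq0 // -natrB // oner_eq0.
Qed.

Lemma trace_A_T_le (dmin : R) T : v != 0 -> 0 < dmin ->
  (forall t q, (0 < t)%N -> dmin <= vnorm (dvec x v o t q)) ->
  \tr (A_T x v o T) <= A_T_trace_bound x v o dmin.
Proof.
move=> v_neq0 dmin_gt0 dmin_le; rewrite /A_T raddf_sum; apply: ler_sum => q _.
set K := (2 + _) / _; rewrite raddf_sum /=.
apply: (@le_trans _ _ (\sum_(1 <= t < T.+1) K / t%:R ^+ 2)).
  apply: ler_sum_nat => t /andP[t_gt0 _]; rewrite mxtrace_proj_term ?dvec_neq0 //.
  by apply: inv_vnorm_line_le; rewrite ?ltr0n // dmin_le.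
rewrite -mulr_sumr ler_wpM2l ?sum_inv_sqr_le2 //.
by rewrite /K divr_ge0 ?addr_ge0 ?divr_ge0 ?mulr_ge0 ?exprn_ge0 ?vnorm_ge0 ?ler0n ?(ltW dmin_gt0).
Qed.

Lemma nonincreasing_trinv_scale_A_T (c : R) : 0 <= c ->
  nonincreasing_seq (fun T => trinv (c *: A_T x v o T)).
Proof.
move=> c_ge0; apply/nonincreasing_seqP => T; rewrite A_TS scalerDr.
by apply: trinv_psd2D_le; apply: psd2Z => //; [exact: psd2_A_T | exact: psd2_A_T_increment].
Qed.

Lemma trinv_scale_A_T_ltS (c : R) [q0] T : 0 < c -> cross2 (lvec x o q0) v != 0 ->
  (0 < T)%N -> (trinv (c *: A_T x v o T.+1) < trinv (c *: A_T x v o T))%E.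
Proof.
move=> c_gt0 cross_neq0 T_gt0.
have detS_gt0 : 0 < \det (c *: A_T x v o T.+1).
  by rewrite detZ mulr_gt0 ?exprn_gt0 // (det_A_T_gt0 cross_neq0).
rewrite A_TS scalerDr in detS_gt0 *.
apply: trinv_psd2D_lt => //.
- by apply: psd2Z; [exact: ltW | exact: psd2_A_T].
- by apply: psd2Z; [exact: ltW | exact: psd2_A_T_increment].
rewrite mxtraceZ mulr_gt0 // raddf_sum (bigD1 q0) //=.
apply: ltr_wpDr; first by apply: sumr_ge0 => q _; apply/psd2_trace_ge0/psd2_proj_term.
by rewrite mxtrace_proj_term ?dvec_neq0 // invr_gt0 exprn_gt0 ?vnorm_gt0 ?dvec_neq0.
Qed.

Lemma trinv_scale_A_T_ge (c dmin : R) T : 0 < c -> v != 0 -> 0 < dmin ->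
  (forall t q, (0 < t)%N -> dmin <= vnorm (dvec x v o t q)) ->
  ((4 / (c * A_T_trace_bound x v o dmin))%:E <= trinv (c *: A_T x v o T))%E.
Proof.
move=> c_gt0 v_neq0 dmin_gt0 dmin_le.
apply: trinv_psd2_ge; first by apply: psd2Z; [exact: ltW | exact: psd2_A_T].
by rewrite mxtraceZ ler_pM2l // trace_A_T_le.
Qed.

Lemma exists_cross2_lvec : v != 0 ->
  (exists i j, row_free (col_mx (lv_family x v o i)^T (lv_family x v o j)^T)) ->
  exists q, cross2 (lvec x o q) v != 0.
Proof.
move=> v_neq0 [[i|] [[j|]]]; rewrite row_free_cross2 /= => cross_neq0.
- have [i_cross|] := eqVneq (cross2 (lvec x o i) v) 0; last by exists i.
  have [j_cross|] := eqVneq (cross2 (lvec x o j) v) 0; last by exists j.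
  by rewrite (cross2_parallel v_neq0 i_cross j_cross) eqxx in cross_neq0.
- by exists i.
- by exists j; rewrite cross2C oppr_eq0.
- by rewrite /cross2 mulrC subrr eqxx in cross_neq0.
Qed.

End Trajectory.

Lemma nonincreasing_cvg_gt0 {R : realType} (u : (\bar R)^nat) (b : R) (n0 : nat) :
  nonincreasing_seq u -> 0 < b -> (forall n, (b%:E <= u n)%E) -> u n0 \is a fin_num ->
  exists l : R, 0 < l /\ u @ \oo --> l%:E.
Proof.
move=> u_noninc b_gt0 u_ge u_fin; have u_cvg := ereal_nonincreasing_cvgn u_noninc.
have inf_ge : (b%:E <= ereal_inf (range u))%E by apply/ereal_infP => _ [n _ <-].
have inf_le : (ereal_inf (range u) <= u n0)%E by apply: ereal_inf_lbound; exists n0.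
move: u_cvg inf_ge inf_le; case: (ereal_inf _) => [l | | ] u_cvg inf_ge inf_le //.
- by exists l; split=> //; apply: lt_le_trans b_gt0 _; rewrite -lee_fin.
- by rewrite leye_eq in inf_le; rewrite (eqP inf_le) in u_fin.
Qed.

Section FisherInformation.
Context {R : realType} {Q : nat} (G1 : R) (Nt : nat) (sigma2 dmin : R).
Context (x v : 'cV[R]_2) (o : 'I_Q -> 'cV[R]_2) (phi : nat -> 'I_Q -> R).
Hypotheses (G1_gt0 : 0 < G1) (sigma2_gt0 : 0 < sigma2) (Nt_gt1 : (1 < Nt)%N)
  (dmin_gt0 : 0 < dmin).

Let gain := G1 * Nt%:R * (Nt%:R ^+ 2 - 1).
Let d t q := dvec x v o t q.

Definition fisher_weight t q : R :=
  (sigma_theta2 G1 Nt sigma2 x v o phi t q * vnorm (d t q) ^+ 4)^-1.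

Lemma FisherXE T : FisherX G1 Nt sigma2 x v o phi T =
  \sum_(1 <= t < T.+1) \sum_(q < Q) fisher_weight t q *: perp_mx (d t q).
Proof. by []. Qed.

Lemma scale_A_TE (c : R) T : c *: A_T x v o T =
  \sum_(1 <= t < T.+1) \sum_(q < Q) (c / vnorm (d t q) ^+ 4) *: perp_mx (d t q).
Proof.
rewrite /A_T scaler_sumr exchange_big /=; apply: eq_bigr => t _.
by rewrite scaler_sumr; apply: eq_bigr => q _; rewrite scalerA.
Qed.

Lemma fisher_weightE t q : fisher_weight t q =
  gain * cos (phi t q) ^+ 2 / (vnorm (d t q) ^+ 2 * sigma2) / vnorm (d t q) ^+ 4.
Proof. by rewrite /fisher_weight /sigma_theta2 invfM invf_div. Qed.

Lemma gain_gt0 : 0 < gain.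
Proof.
have Nt_gt1' : 1 < (Nt%:R : R) by rewrite ltr1n.
rewrite /gain; apply: mulr_gt0; first by rewrite mulr_gt0 // (lt_trans ltr01).
by rewrite subr_gt0; nra.
Qed.

Lemma C0_gt0 : 0 < C0 G1 Nt sigma2 dmin.
Proof. by rewrite divr_gt0 ?gain_gt0 ?mulr_gt0 ?exprn_gt0. Qed.

Lemma fisher_weight_ge0 t q : 0 <= fisher_weight t q.
Proof.
rewrite fisher_weightE; apply: mulr_ge0; last by rewrite invr_ge0 exprn_ge0 ?vnorm_ge0.
apply: mulr_ge0; last by rewrite invr_ge0 mulr_ge0 ?exprn_ge0 ?vnorm_ge0 ?ltW.
by rewrite mulr_ge0 ?sqr_ge0 ?ltW ?gain_gt0.
Qed.

(* The weight is largest for an AP at distance [dmin] facing the user ([cos = 1]). *)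
Lemma fisher_weight_le t q : dmin <= vnorm (d t q) ->
  fisher_weight t q <= C0 G1 Nt sigma2 dmin / vnorm (d t q) ^+ 4.
Proof.
move=> dmin_le; set n := vnorm (d t q).
have n_gt0 : 0 < n := lt_le_trans dmin_gt0 dmin_le.
have cos2_le1 : cos (phi t q) ^+ 2 <= 1.
  by have := cos2Dsin2 (phi t q); have := sqr_ge0 (sin (phi t q)); lra.
rewrite fisher_weightE /C0 -/gain -/n; apply: ler_wpM2r; first by rewrite invr_ge0 exprn_ge0 ?ltW.
rewrite -mulrA ler_pM2l ?gain_gt0 // [sigma2 * _]mulrC.
apply: le_trans (_ : (n ^+ 2 * sigma2)^-1 <= _).
  by rewrite ger_pMl ?invr_gt0 ?mulr_gt0 ?exprn_gt0.
by rewrite lef_pV2 ?posrE ?mulr_gt0 ?exprn_gt0 // ler_pM2r // ler_pXn2r // ?nnegrE ?ltW.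
Qed.

Lemma fisher_weight_eq t q : vnorm (d t q) = dmin -> phi t q = 0 ->
  fisher_weight t q = C0 G1 Nt sigma2 dmin / vnorm (d t q) ^+ 4.
Proof.
move=> dmin_eq phi0; rewrite fisher_weightE phi0 cos0 expr1n mulr1 dmin_eq.
by rewrite /C0 -/gain [sigma2 * _]mulrC.
Qed.

Hypothesis dmin_le : forall t q, (0 < t)%N -> dmin <= vnorm (d t q).

Lemma Delta_bar_le_CRLB T :
  (Delta_bar G1 Nt sigma2 dmin x v o T <= CRLB G1 Nt sigma2 x v o phi T)%E.
Proof.
rewrite /Delta_bar /CRLB scale_A_TE FisherXE.
pose w t q := C0 G1 Nt sigma2 dmin / vnorm (d t q) ^+ 4.
have psd2_weighted (c : nat -> 'I_Q -> R) : (forall t q, (0 < t)%N -> 0 <= c t q) ->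
    psd2 (\sum_(1 <= t < T.+1) \sum_(q < Q) c t q *: perp_mx (d t q)).
  move=> c_ge0; rewrite big_nat_cond; apply: psd2_sum => t /andP[/andP[t_gt0 _] _].
  by apply: psd2_sum => q _; apply: psd2Z; [exact: c_ge0 | exact: psd2_perp_mx].
rewrite (_ : \sum_(1 <= t < T.+1) _ =
  \sum_(1 <= t < T.+1) \sum_(q < Q) fisher_weight t q *: perp_mx (d t q) +
  \sum_(1 <= t < T.+1) \sum_(q < Q) (w t q - fisher_weight t q) *: perp_mx (d t q)).
  apply: trinv_psd2D_le; apply: psd2_weighted => t q t_gt0.
    exact: fisher_weight_ge0.
  by rewrite subr_ge0 fisher_weight_le ?dmin_le.
rewrite -big_split; apply: eq_bigr => t _; rewrite -big_split; apply: eq_bigr => q _.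
by rewrite /= -scalerDl addrC subrK.
Qed.

Lemma CRLB_eq_Delta_bar T :
  (forall t q, (0 < t <= T)%N -> vnorm (d t q) = dmin /\ phi t q = 0) ->
  CRLB G1 Nt sigma2 x v o phi T = Delta_bar G1 Nt sigma2 dmin x v o T.
Proof.
move=> dmin_phi; rewrite /Delta_bar /CRLB scale_A_TE FisherXE; congr trinv.
apply: eq_big_nat => t tT; apply: eq_bigr => q _.
by have [dq phiq] := dmin_phi t q tT; rewrite fisher_weight_eq.
Qed.

End FisherInformation.

Theorem proposition1 (R : realType) (Q Nt : nat) (G1 sigma2 : R)
  (o : 'I_Q -> 'cV[R]_2) (x v : 'cV[R]_2) (phi : nat -> 'I_Q -> R) (dmin : R) :
  0 < G1 -> 0 < sigma2 -> (1 < Nt)%N -> v != 0 ->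
  (forall (t : nat) (q : 'I_Q), (0 < t)%N -> dvec x v o t q != 0) ->
  (forall (t : nat) (q : 'I_Q), (0 < t)%N -> dmin <= vnorm (dvec x v o t q)) ->
  (exists (t : nat) (q : 'I_Q), (0 < t)%N /\ vnorm (dvec x v o t q) = dmin) ->
  0 < dmin ->
  (forall T : nat,
     (Delta_bar G1 Nt sigma2 dmin x v o T <= CRLB G1 Nt sigma2 x v o phi T)%E) /\
  (forall T : nat,
     (forall (t : nat) (q : 'I_Q), (0 < t <= T)%N ->
        vnorm (dvec x v o t q) = dmin /\ phi t q = 0) ->
     CRLB G1 Nt sigma2 x v o phi T = Delta_bar G1 Nt sigma2 dmin x v o T) /\
  ((exists i j : option 'I_Q,
      row_free (col_mx (lv_family x v o i)^T (lv_family x v o j)^T)) ->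
   (forall T : nat, (0 < T)%N ->
      (Delta_bar G1 Nt sigma2 dmin x v o T.+1 < Delta_bar G1 Nt sigma2 dmin x v o T)%E) /\
   (exists L : R, 0 < L /\
      (fun T : nat => Delta_bar G1 Nt sigma2 dmin x v o T) @ \oo --> (L%:E)%E)).
Proof.
move=> G1_gt0 sigma2_gt0 Nt_gt1 v_neq0 dvec_neq0 dmin_le _ dmin_gt0.
split; first exact: Delta_bar_le_CRLB.
split; first exact: CRLB_eq_Delta_bar.
move=> /(exists_cross2_lvec v_neq0) [q0 cross_neq0].
have c_gt0 : 0 < C0 G1 Nt sigma2 dmin by apply: C0_gt0.
split; first by move=> T; apply: trinv_scale_A_T_ltS cross_neq0.
have det2_gt0 := det_A_T_gt0 dvec_neq0 cross_neq0 (ltnSn 1).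
set c := C0 G1 Nt sigma2 dmin; set B := A_T_trace_bound x v o dmin.
have B_gt0 : 0 < B.
  apply: lt_le_trans (psd2_trace_gt0 (psd2_A_T 2) det2_gt0) _.
  exact: trace_A_T_le dvec_neq0 dmin 2 v_neq0 dmin_gt0 dmin_le.
apply: (@nonincreasing_cvg_gt0 _ _ (4 / (c * B)) 2).
- exact/nonincreasing_trinv_scale_A_T/ltW.
- by apply: divr_gt0; [rewrite ltr0n | exact: mulr_gt0].
- by move=> T; apply: trinv_scale_A_T_ge.
- apply: trinv_psd2_fin_num; first by apply: psd2Z; [exact: ltW | exact: psd2_A_T].
  by rewrite detZ mulr_gt0 ?exprn_gt0.
Qed.
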